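(* Let $x$ be a point in a model $M$. The following are equivalent: (1) $x$ is separated; (2) there exists a $(\wedge,\to)$-formula $\varphi$ such that $x$ is a $\varphi$-border point, i.e. $x\not\models\varphi$ while every $y>x$ satisfies $\varphi$.
   Context: Fix $n\ge 1$ and propositional variables $p_1,\dots,p_n$; $2^n=\{0,1\}^n$ with componentwise order. A model is $(M,\le,c)$ with $(M,\le)$ a poset and $c:M\to 2^n$ order-preserving, with the usual intuitionistic Kripke semantics ($x\models p_i$ iff $c(x)_i=1$; $x\models\varphi\to\psi$ iff for all $y\ge x$, $y\models\varphi$ implies $y\models\psi$; etc.). Write $v(\varphi)=\{x: x\models\varphi\}$. A $(\wedge,\to)$-formula is a formula built from $p_1,\dots,p_n$ using only $\wedge$ and $\to$. For an up-set $A$, a border point of $A$ is a maximal element of $M\setminus A$; $x$ is a $\varphi$-border point if it is a border point of $v(\varphi)$. A point is separated if it is a $q$-border point for some propositional variable $q$. *)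

From mathcomp Require Import all_boot.
Set Implicit Arguments. Unset Strict Implicit. Unset Printing Implicit Defensive.

(* Propositional formulas over the variables p_0, ..., p_{n-1}
   (the paper's p_1..p_n). *)
Inductive formula (n : nat) : Type :=
  | Var : 'I_n -> formula n
  | Bot : formula n
  | And : formula n -> formula n -> formula n
  | Or  : formula n -> formula n -> formula n
  | Imp : formula n -> formula n -> formula n.
Arguments Bot {n}.

Fixpoint andimp_formula n (f : formula n) : Prop :=
  match f with
  | Var _ => True
  | Bot => False
  | And a b => andimp_formula a /\ andimp_formula b
  | Or _ _ => False
  | Imp a b => andimp_formula a /\ andimp_formula b
  end.

(* A model (M, <=, c): a poset with an order-preserving colouring
   c : M -> 2^n (an element of 2^n is a function 'I_n -> bool,
   ordered componentwise). *)
Record model (n : nat) := Model {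
  carrier :> Type;
  le : carrier -> carrier -> Prop;
  le_refl : forall x, le x x;
  le_trans : forall x y z, le x y -> le y z -> le x z;
  le_antisym : forall x y, le x y -> le y x -> x = y;
  col : carrier -> 'I_n -> bool;
  col_mono : forall x y i, le x y -> col x i -> col y i
}.

Fixpoint forces n (M : model n) (x : M) (f : formula n) : Prop :=
  match f with
  | Var i => col x i = true
  | Bot => False
  | And a b => forces x a /\ forces x b
  | Or a b => forces x a \/ forces x b
  | Imp a b => forall y : M, le x y -> forces y a -> forces y b
  end.

Definition v n (M : model n) (f : formula n) : M -> Prop := fun x => forces x f.

Definition border_point n (M : model n) (A : M -> Prop) (x : M) : Prop :=
  ~ A x /\ forall y : M, le x y -> ~ A y -> y = x.

Definition phi_border_point n (M : model n) (f : formula n) (x : M) : Prop :=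
  border_point (v f) x.

Definition separated n (M : model n) (x : M) : Prop :=
  exists i : 'I_n, phi_border_point (Var i) x.

From mathcomp Require Import all_boot.
From Stdlib Require Import Classical.

(* Along a (/\,->)-formula the border point descends to a variable: at a
   conjunction it is a border point of a conjunct it refutes; at an implication
   [a -> b], a witness [y >= x] of [a] refuting [b] refutes the implication too,
   so by maximality it is [x] itself, and [x] is a border point of [b]. *)

Lemma forces_mono n (M : model n) (f : formula n) (x y : M) :
  le x y -> forces x f -> forces y f.
Proof.
elim: f x y => [i||a IHa b IHb|a IHa b IHb|a IHa b IHb] x y Hxy /=.
- by move=> Hx; apply: (col_mono Hxy); rewrite Hx.
- by [].
- by case=> Ha Hb; split; [apply: IHa Hxy Ha | apply: IHb Hxy Hb].
- by case=> H; [left; apply: IHa Hxy H | right; apply: IHb Hxy H].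
- by move=> H z Hyz; apply: H; apply: le_trans Hxy Hyz.
Qed.

Lemma border_point_And n (M : model n) (a b : formula n) (x : M) :
  phi_border_point (And a b) x -> phi_border_point a x \/ phi_border_point b x.
Proof.
case=> Hx Hmax; case: (classic (forces x a)) => Hxa; [right | left]; split.
- by move=> Hxb; apply: Hx.
- by move=> y Hxy Hyb; apply: Hmax => // -[].
- by [].
- by move=> y Hxy Hya; apply: Hmax => // -[].
Qed.

Lemma border_point_Imp n (M : model n) (a b : formula n) (x : M) :
  phi_border_point (Imp a b) x -> phi_border_point b x.
Proof.
case=> Hx Hmax.
have [y [Hxy [Hya Hyb]]] : exists y, le x y /\ forces y a /\ ~ forces y b.
  apply: NNPP => Hno; apply: Hx => y Hxy Hya.
  by apply: NNPP => Hyb; apply: Hno; exists y.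
have Hyx : y = x.
  by apply: Hmax => // Hy; apply: Hyb; apply: Hy => //; apply: le_refl.
subst y; split => // z Hxz Hzb; apply: Hmax => // Hz; apply: Hzb.
by apply: Hz; [apply: le_refl | apply: forces_mono Hxz Hya].
Qed.

Lemma andimp_border_point_separated n (M : model n) (f : formula n) (x : M) :
  andimp_formula f -> phi_border_point f x -> separated x.
Proof.
elim: f x => [i||a IHa b IHb|a IHa b IHb|a IHa b IHb] x //=.
- by move=> _ Hx; exists i.
- by case=> Ha Hb /border_point_And [/IHa | /IHb]; apply.
- by case=> _ Hb /border_point_Imp; apply: IHb.
Qed.

Theorem lemma3p4 (n : nat) (Hn : 0 < n) (M : model n) (x : M) :
  separated x <->
  exists f : formula n, andimp_formula f /\ phi_border_point f x.
Proof.
split.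
- by case=> i Hi; exists (Var i).
- by case=> f [Hf Hx]; apply: andimp_border_point_separated Hf Hx.
Qed.
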